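(* Let $n\in\mathbb{N}$, let $I$ be a closed interval, and let $f_j\in\mathscr{E}'(I)$ for $j\in\mathbb{Z}_n$. Then there exists $\alpha\in\mathbb{C}$ with $\alpha^n=1$ such that \[ \inf\mathop{\rm supp}\sum_{j\in\mathbb{Z}_n}\alpha^j f_j=\min_{j\in\mathbb{Z}_n}\inf\mathop{\rm supp} f_j . \]
   Context: $\mathbb{Z}_n=\mathbb{Z}\bmod n$. $\mathscr{E}'(I)$ denotes distributions on $\mathbb{R}$ supported in $I$ (equivalently, for an interval of $\mathbb{T}$ identified with a lifted interval of $\mathbb{R}$). *)

From HB Require Import structures.
From mathcomp Require Import all_boot all_order all_algebra.
From mathcomp Require Import all_classical all_reals all_analysis.
From mathcomp Require Import complex.
Set Implicit Arguments. Unset Strict Implicit. Unset Printing Implicit Defensive.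
Import Order.TTheory GRing.Theory Num.Theory.
Local Open Scope ring_scope.
Local Open Scope classical_set_scope.

Definition smooth (R : realType) (phi : R -> R) : Prop :=
  forall (k : nat) (x : R), derivable (derive1n k phi) x 1.

(* A complex-valued distribution with compact support, given by its action on
   real-valued smooth test functions (complex-linear extension is unique).
   E'(R) = continuous linear functionals on C^oo(R): linearity plus the
   seminorm estimate |u phi| <= C * sum_{k<=N} sup_{|x|<=r} |phi^(k)(x)|. *)
Definition is_cdistr (R : realType) (u : (R -> R) -> R[i]) : Prop :=
  (forall phi psi, smooth phi -> smooth psi ->
     u (fun x => phi x + psi x) = u phi + u psi) /\
  (forall (c : R) phi, smooth phi -> u (fun x => c * phi x) = (c%:C)%C * u phi) /\
  (exists (C r : R) (N : nat), forall phi, smooth phi ->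
     `|u phi| <= (C * \sum_(k < N.+1)
                   sup [set `|derive1n k phi x| | x in `[- r, r]])%:C%C).

Definition dsupp (R : realType) (u : (R -> R) -> R[i]) : set R :=
  [set x : R | ~ exists2 e : R, 0 < e & forall phi : R -> R, smooth phi ->
       (forall y : R, ~ (`|y - x| < e) -> phi y = 0) -> u phi = 0].

(* inf supp u, in the extended reals (= +oo when the support is empty). *)
Definition inf_supp (R : realType) (u : (R -> R) -> R[i]) : \bar R :=
  ereal_inf (EFin @` dsupp u).

From HB Require Import structures.
From mathcomp Require Import all_boot all_order all_algebra.
From mathcomp Require Import all_classical all_reals all_analysis.
From mathcomp Require Import complex separable cyclic cyclotomic ring.
Import Order.TTheory GRing.Theory Num.Theory.
Local Open Scope ring_scope.
Local Open Scope classical_set_scope.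

(* Let w be a primitive n-th root of unity and g_l := sum_j w^(lj) f_j.  Each
   g_l is a linear combination of the f_j, and by discrete Fourier inversion
   each f_k is a linear combination of the g_l.  Since the complement of the
   support of a linear combination contains the intersection of the
   complements of the supports of its terms, min_j inf supp f_j and
   min_l inf supp g_l bound each other, and alpha := w^l for an l attaining
   the latter minimum works. *)

Lemma closed_field_prim_root_exists {C : closedFieldType} {n : nat} :
  (0 < n)%N -> n%:R != 0 :> C -> exists w : C, n.-primitive_root w.
Proof.
move=> n_gt0 n_neq0; have [rs def_p] := closed_field_poly_normal ('X^n - 1 : {poly C}).
rewrite -polyC1 (monicP (monicXnsubC 1 n_gt0)) polyC1 scale1r in def_p.
have uniq_rs : uniq rs.
  by rewrite -separable_prod_XsubC -def_p separable_Xn_sub_1.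
have size_rs : size rs = n.
  by have := size_XnsubC (1 : C) n_gt0; rewrite polyC1 def_p size_prod_XsubC => -[].
have unity_rs : all n.-unity_root rs.
  by apply/allP => x x_in; rewrite /root_of_unity /= def_p root_prod_XsubC.
have /hasP[w _ prim_w] := has_prim_root n_gt0 unity_rs uniq_rs (eq_leq (esym size_rs)).
by exists w.
Qed.

Section RootsOfUnity.

Context {F : fieldType}.

Lemma sum_expr_unity (n : nat) (z : F) : z ^+ n = 1 ->
  \sum_(l < n) z ^+ l = if z == 1 then n%:R else 0.
Proof.
move=> zn1; have [->|z_neq1] := eqVneq z 1.
  by under eq_bigr do rewrite expr1n; rewrite sumr_const card_ord.
have /esym/eqP := subrX1 z n; rewrite zn1 subrr mulf_eq0 subr_eq0.
by rewrite (negbTE z_neq1) => /eqP.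
Qed.

Lemma prim_root_dft_inversion {n : nat} {w : F} (x : 'I_n -> F) (k : 'I_n) :
  n.-primitive_root w -> n%:R != 0 :> F ->
  x k = \sum_(l < n) (n%:R^-1 * (w ^+ l) ^+ (n - k)) *
          \sum_(j < n) (w ^+ l) ^+ j * x j.
Proof.
move=> prim_w n_neq0.
have kn : (k + (n - k) = n)%N by rewrite subnKC // ltnW.
have unity_j (j : 'I_n) : (w ^+ (j + (n - k))) ^+ n = 1.
  by rewrite -exprM mulnC exprM (prim_expr_order prim_w) expr1n.
have delta_j (j : 'I_n) : (w ^+ (j + (n - k)) == 1) = (j == k).
  rewrite -[1](prim_expr_order prim_w) -[X in _ == w ^+ X]kn.
  by rewrite (eq_prim_root_expr prim_w) eqn_modDr !modn_small.
transitivity (\sum_(j < n) n%:R^-1 * \sum_(l < n) (w ^+ (j + (n - k))) ^+ l * x j).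
  under eq_bigr => j _ do rewrite -mulr_suml sum_expr_unity // delta_j.
  rewrite (bigD1 k) //= eqxx mulrA mulVf // mul1r big1 ?addr0 // => j.
  by move=> /negbTE ->; rewrite mul0r mulr0.
under eq_bigr do rewrite big_distrr.
rewrite exchange_big; apply: eq_bigr => l _; rewrite big_distrr /=.
apply: eq_bigr => j _.
by rewrite -!exprM mulnDl exprD (mulnC l j) (mulnC l (n - k)%N); ring.
Qed.

End RootsOfUnity.

Section SupportOfLinearCombinations.

Variables (R : realType) (I : finType).
Implicit Types (u : (R -> R) -> R[i]) (v : I -> (R -> R) -> R[i]) (c : I -> R[i]).

Lemma not_dsupp_lincomb u v c (x : R) :
  (forall phi, u phi = \sum_i c i * v i phi) ->
  (forall i, ~ dsupp (v i) x) -> ~ dsupp u x.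
Proof.
move=> def_u notin_v; apply; rewrite /dsupp /=.
have /choice[e e_prop] : forall i, exists e : R, 0 < e /\ forall phi, smooth phi ->
    (forall y : R, ~ (`|y - x| < e) -> phi y = 0) -> v i phi = 0.
  by move=> i; have /contrapT[e e_gt0 ?] := notin_v i; exists e.
exists (\big[Num.min/1]_i e i).
  apply: (big_ind (fun r : R => 0 < r)) => // [r s r_gt0 s_gt0|i _].
    by rewrite lt_min r_gt0 s_gt0.
  by case: (e_prop i).
move=> phi phi_smooth phi_vanish; rewrite def_u big1 // => i _.
have [_ ->] := e_prop i; rewrite ?mulr0 // => y y_far; apply: phi_vanish => y_near.
by apply: y_far; apply: lt_le_trans y_near _; exact: bigmin_le.
Qed.

Lemma not_dsupp_lt_inf_supp u (x : R) : (x%:E < inf_supp u)%E -> ~ dsupp u x.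
Proof.
move=> x_lt x_in; have : (inf_supp u <= x%:E)%E by apply: ereal_inf_lbound; exists x.
by rewrite leNgt x_lt.
Qed.

Lemma bigmin_inf_supp_le_lincomb u v c :
  (forall phi, u phi = \sum_i c i * v i phi) ->
  (\big[Order.min/+oo%E]_i inf_supp (v i) <= inf_supp u)%E.
Proof.
move=> def_u; apply/ereal_infP => _ [x x_in <-]; rewrite leNgt; apply/negP => x_lt.
apply: (not_dsupp_lincomb _ _ _ _ def_u _ x_in) => i; apply: not_dsupp_lt_inf_supp.
by apply: lt_le_trans x_lt _; exact: bigmin_le.
Qed.

End SupportOfLinearCombinations.

Theorem lemma1 (R : realType) (n : nat) (hn : (0 < n)%N) (a b : R) (hab : a <= b)
  (f : 'I_n -> (R -> R) -> R[i])
  (hf : forall j, is_cdistr (f j) /\ dsupp (f j) `<=` `[a, b]) :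
  exists alpha : R[i], alpha ^+ n = 1 /\
    inf_supp (fun phi => \sum_(j < n) alpha ^+ j * f j phi)
    = \big[Order.min/+oo%E]_(j < n) inf_supp (f j).
Proof.
have n_neq0 : n%:R != 0 :> R[i] by rewrite pnatr_eq0 -lt0n.
have [w prim_w] := closed_field_prim_root_exists hn n_neq0.
pose g (l : 'I_n) phi := \sum_(j < n) (w ^+ l) ^+ j * f j phi.
have f_le_g : (\big[Order.min/+oo%E]_(j < n) inf_supp (f j)
               <= \big[Order.min/+oo%E]_(l < n) inf_supp (g l))%E.
  by apply: le_bigmin => [|l _]; [exact: leey | exact: bigmin_inf_supp_le_lincomb].
have g_le_f : (\big[Order.min/+oo%E]_(l < n) inf_supp (g l)
               <= \big[Order.min/+oo%E]_(j < n) inf_supp (f j))%E.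
  apply: le_bigmin => [|k _]; first exact: leey.
  apply: bigmin_inf_supp_le_lincomb => phi.
  exact: (prim_root_dft_inversion (fun j => f j phi) k prim_w n_neq0).
have [l _ min_g] := eq_bigmin (Ordinal hn) xpredT (fun l => inf_supp (g l)) isT
                      (fun l _ => leey (inf_supp (g l))).
exists (w ^+ l); split; first by rewrite -exprM mulnC exprM (prim_expr_order prim_w) expr1n.
rewrite min_g in f_le_g g_le_f.
by apply: le_anti; apply/andP; split; [exact: g_le_f | exact: f_le_g].
Qed.
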